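(* Let $G=(V,E)$ be a finite, undirected, unweighted, 2-vertex-connected graph with $n=|V|$ vertices, and let $\gamma<3$ be a real number. Suppose $T$ is a minimum spanning tree of $G$ and $C_T$ is a cycle (closed walk) in $G$, not necessarily simple, whose vertex set contains every vertex of odd degree in $T$, and such that $\ell(C_T)\le(1+\gamma)|C_T|$. Then $G$ has a TSP tour of length at most $\frac{4n}{3-\gamma}$.
   Context: For a (not necessarily simple) cycle $C$, i.e. a closed walk in $G$ that may repeat vertices, $|C|$ denotes the number of distinct vertices of $C$ and $\ell(C)$ denotes the length of a traversal of $C$, i.e. the number of edges traversed counted with multiplicity. A TSP tour of $G$ is a closed walk in $G$ visiting every vertex at least once, with length the number of edges traversed counted with multiplicity. Since $G$ is unweighted, every spanning tree is a minimum spanning tree. *)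

From mathcomp Require Import all_boot all_order all_algebra.
Set Implicit Arguments. Unset Strict Implicit. Unset Printing Implicit Defensive.

Definition simple_graph (V : finType) (e : rel V) : Prop :=
  symmetric e /\ irreflexive e.

Definition connected_graph (V : finType) (e : rel V) : Prop :=
  forall x y : V, connect e x y.

Definition del_vertex (V : finType) (e : rel V) (v : V) : rel V :=
  fun a b => [&& e a b, a != v & b != v].

Definition two_vertex_connected (V : finType) (e : rel V) : Prop :=
  2 < #|V| /\ connected_graph e /\
  forall v x y : V, x != v -> y != v -> connect (del_vertex e v) x y.

Definition del_edge (V : finType) (t : rel V) (u v : V) : rel V :=
  fun a b => t a b && ~~ (((a == u) && (b == v)) || ((a == v) && (b == u))).

(* t is a spanning tree of the graph e: a symmetric subgraph of e on all
   vertices that is connected and minimally so (every edge is a bridge,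
   i.e. it is acyclic). *)
Definition spanning_tree (V : finType) (e t : rel V) : Prop :=
  symmetric t /\ subrel t e /\ connected_graph t /\
  forall u v : V, t u v -> ~~ connect (del_edge t u v) u v.

Definition deg (V : finType) (t : rel V) (x : V) : nat := #|[set y | t x y]|.

(* A closed walk starting and ending at x, traversing the vertices of p in
   order: x, p_1, ..., p_k with p_k = x. *)
Definition closed_walk (V : finType) (e : rel V) (x : V) (p : seq V) : bool :=
  path e x p && (last x p == x).

Definition walk_length (V : eqType) (x : V) (p : seq V) : nat := size p.

Definition walk_nverts (V : eqType) (x : V) (p : seq V) : nat :=
  size (undup (x :: p)).

Definition tsp_tour (V : finType) (e : rel V) (x : V) (p : seq V) : Prop :=
  closed_walk e x p /\ forall v : V, v \in x :: p.

From mathcomp Require Import all_boot all_order all_algebra.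
From mathcomp Require Import zify lra.
Import Order.TTheory GRing.Theory Num.Theory.

Set Implicit Arguments. Unset Strict Implicit. Unset Printing Implicit Defensive.

(* Two tours are compared.  Tour A extends the closed walk C by a two-edge
   detour to each of the n - |C| vertices it misses, so it has length
   l(C) + 2 (n - |C|).  Tour B starts from the odd-degree vertices of T, which
   all lie on C: cutting C at them yields two families of walks, each pairing
   them up, and the shorter family has total length at most l(C) / 2.  The tree
   T together with that family is a connected Eulerian multigraph; peeling
   leaves off T turns it into a tour of length n - 1 + l(C) / 2.  Since
   l(C) <= (1 + gamma) |C|, the shorter of the two tours has length at most
   4n / (3 - gamma). *)

Lemma card_seq_ltP (V : finType) (s : seq V) :
  reflect (exists z, z \notin s) (#|s| < #|V|).
Proof.
apply: (iffP idP) => [lt|[z zs]]; last first.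
  by apply: leq_trans (max_card [predU1 z & s]); rewrite cardU1 zs.
apply/existsP; apply: contraTT lt => /existsPn all_s.
by rewrite -leqNgt; apply/subset_leq_card/subsetP => z _; move/negPn: (all_s z).
Qed.

Section ClosedWalks.
Variables (V : finType) (e : rel V).

Lemma rotate_closed_walk y q u : closed_walk e y q -> u \in y :: q ->
  exists2 q', closed_walk e u q' & size q' = size q /\ (u :: q') =i y :: q.
Proof.
rewrite inE => cw; case: eqP => [-> _|_ uq]; first by exists q.
move: cw; case/splitPr: uq => q1 q2; rewrite /closed_walk.
rewrite cat_path last_cat /= => /andP[/and3P[p1 eu p2] /eqP ly].
exists (q2 ++ rcons q1 u).
  by rewrite /closed_walk cat_path ly rcons_path p1 eu p2 last_cat last_rcons eqxx.
split; first by rewrite !size_cat /= size_rcons; lia.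
have yq2 : y \in u :: q2 by rewrite -ly mem_last.
move=> z; rewrite !inE !mem_cat mem_rcons !inE.
move: yq2; rewrite inE; case: (z =P y) => [->|_ _]; first by case/orP=> ->; rewrite ?orbT.
by case: (z == u); case: (z \in q1); case: (z \in q2).
Qed.

Lemma splice_closed_walk y q b d : closed_walk e y q -> b \in y :: q ->
  closed_walk e b d ->
  exists2 q', closed_walk e b q' &
    size q' = size q + size d /\ (b :: q') =i y :: q ++ d.
Proof.
move=> cw /(rotate_closed_walk cw) [q0 /andP[p0 /eqP l0] [s0 m0]] /andP[pd /eqP ld].
exists (q0 ++ d); first by rewrite /closed_walk cat_path p0 l0 pd last_cat l0 ld eqxx.
split; first by rewrite size_cat s0.
by move=> z; have := m0 z; rewrite !inE !mem_cat !orbA => ->.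
Qed.

Lemma connect_cross (P : pred V) a b : connect e a b -> P a -> ~~ P b ->
  exists c d, [/\ P c, ~~ P d & e c d].
Proof.
case/connectP => s; elim: s a => [|y s IH] a /=; first by move=> _ -> Pb /negP.
case/andP=> eay ps lb Pa nPb; case Py: (P y); first exact: IH y ps lb Py nPb.
by exists a, y; rewrite Py.
Qed.

Hypotheses (e_sym : symmetric e) (e_conn : connected_graph e).

Lemma closed_walk_to_tour y q : closed_walk e y q ->
  exists y' q', tsp_tour e y' q' /\ size q' = size q + (#|V| - #|y :: q|).*2.
Proof.
move def_k : (#|V| - #|y :: q|) => k; elim: k y q def_k => [|k IH] y q def_k cw.
  exists y, q; split; last by rewrite addn0.
  split=> // z; apply: contraT => zq.
  have : #|y :: q| < #|V| by apply/card_seq_ltP; exists z.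
  lia.
have /card_seq_ltP [z zq] : #|y :: q| < #|V| by lia.
have [c [d [cq dq ecd]]] := connect_cross (e_conn y z) (mem_head y q) zq.
have [q' /andP[pq' /eqP lq'] [sq' mq']] := rotate_closed_walk cw cq.
have cw' : closed_walk e c (d :: c :: q').
  by rewrite /closed_walk /= ecd e_sym ecd pq' lq' eqxx.
have card' : #|c :: d :: c :: q'| = #|y :: q|.+1.
  have -> : #|c :: d :: c :: q'| = #|[predU1 d & y :: q]|.
    apply: eq_card => w; have := mq' w; rewrite !inE => <-.
    by case: (w == c); case: (w == d).
  by rewrite cardU1 dq.
have def_k' : #|V| - #|c :: d :: c :: q'| = k by lia.
have [y2 [q2 [tour2 size2]]] := IH c (d :: c :: q') def_k' cw'.
by exists y2, q2; split=> //; rewrite size2 /= sq'; lia.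
Qed.

End ClosedWalks.

(* An open walk is a pair (first vertex, remaining vertices), as in
   [closed_walk]; a family of walks is a list of them. *)
Section WalkFamilies.
Variable V : finType.
Implicit Types (w : V * seq V) (J : seq (V * seq V)).

Definition wlast w := last w.1 w.2.
Definition endpoints J := flatten [seq [:: w.1; wlast w] | w <- J].
Definition wlength J := sumn [seq size w.2 | w <- J].
Definition on_walks J z := has (fun w => z \in w.1 :: w.2) J.
Definition wrev w := (wlast w, rev (belast w.1 w.2)).

Lemma wrev_last w : wlast (wrev w) = w.1.
Proof.
case: w => a s; rewrite /wrev /wlast /=.
by rewrite -[last _ _]/(last a (last a s :: _)) -rev_rcons -lastI rev_cons last_rcons.
Qed.

Lemma mem_wrev w : (wrev w).1 :: (wrev w).2 =i w.1 :: w.2.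
Proof. by case: w => a s z; rewrite /wrev /wlast /= -rev_rcons -lastI mem_rev. Qed.

Lemma size_wrev w : size (wrev w).2 = size w.2.
Proof. by rewrite size_rev size_belast. Qed.

Variable e : rel V.
Hypothesis e_sym : symmetric e.

Definition walk w := path e w.1 w.2.

Lemma wrev_walk w : walk (wrev w) = walk w.
Proof.
by rewrite /walk /wrev /wlast /= rev_path; apply: eq_path => a b; exact: e_sym.
Qed.

Lemma extract_walk J v : v \in endpoints J -> all walk J ->
  exists a s J', [/\ path e a s /\ last a s = v, all walk J',
    perm_eq (endpoints J) (a :: v :: endpoints J'), wlength J = size s + wlength J' &
    forall z, on_walks J z = (z \in a :: s) || on_walks J' z].
Proof.
elim: J => // [[b s] J IH]; rewrite /endpoints /= -/(endpoints J) !inE.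
case/orP => [/eqP vb | /orP[/eqP vl | vJ]] /andP[wbs wJ].
- exists (wrev (b, s)).1, (wrev (b, s)).2, J; split=> //.
  + by split; [rewrite -/(walk (wrev (b, s))) wrev_walk | rewrite -/(wlast _) wrev_last].
  + by apply/permP => P; rewrite vb /wrev /= -/(endpoints J); lia.
  + by rewrite size_wrev.
  + by move=> z; rewrite mem_wrev.
- by exists b, s, J; rewrite vl; split.
- have [a [s' [J' [[pa la] wJ' pe le cov]]]] := IH vJ wJ.
  exists a, s', ((b, s) :: J'); split=> //.
  + by rewrite /= wbs.
  + apply/permP => P; have := permP pe P.
    by rewrite /= -/(endpoints J) -/(endpoints J') => ->; lia.
  + by rewrite /wlength /= -!/(wlength _) le; lia.
  + by move=> z; rewrite /on_walks /= -!/(on_walks _ z) cov orbCA.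
Qed.

End WalkFamilies.

Section Pairing.
Variables (V : finType) (e : rel V).
Local Notation walk := (walk e).

(* Cut the path at the successive first visits [M] of the vertices of [O];
   the pieces go alternately to [JA] and [JB]. *)
Lemma alternating_split (O : {set V}) a s : path e a s ->
  exists JA JB M, [/\ all walk JA, all walk JB,
   wlength JA + wlength JB = size s,
   uniq M /\ (forall y, (y \in M) = (y \in O) && (y \in s)) &
   perm_eq (endpoints JA) (a :: M ++ (if odd (size M) then [::] else [:: last a s])) /\
   perm_eq (endpoints JB) (M ++ (if odd (size M) then [:: last a s] else [::]))].
Proof.
have [n] := ubnP (size s); elim: n O a s => // n IH O a s lt_s_n as_path.
have [hs|] := boolP (has (mem O) s); last first.
  move/hasPn => nO; exists [:: (a, s)], [::], [::]; split=> //=.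
  - by rewrite /walk as_path.
  - by rewrite /wlength /= !addn0.
  - split=> // y; rewrite in_nil; apply/esym/negbTE/andP => -[yO /nO].
    by rewrite /= yO.
case/split_find: hs as_path lt_s_n => o s1 s2 oO hs1.
rewrite cat_path rcons_path size_cat size_rcons => /andP[/andP[p1 e1] p2] lt_s_n.
rewrite last_rcons in p2; have lt_s2_n : size s2 < n by lia.
have [JA [JB [M [wA wB len [uM mM] [pA pB]]]]] := IH (O :\ o) o s2 lt_s2_n p2.
have oM : o \notin M by rewrite mM !inE eqxx.
exists ((a, rcons s1 o) :: JB), JA, (o :: M); split.
- by rewrite /= wB andbT /walk /= rcons_path p1 e1.
- by [].
- by rewrite /wlength /= size_rcons -!/(wlength _); lia.
- split; first by rewrite /= oM uM.
  move=> y; rewrite inE mM !inE mem_cat mem_rcons !inE.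
  case: (y =P o) => [->|_] /=; first by rewrite andbT (oO : o \in O).
  case yO: (y \in O) => //=; case ys1: (y \in s1) => //=.
  by move/hasPn: hs1 => /(_ y ys1); rewrite /= yO.
- rewrite last_cat last_rcons /endpoints /= -/(endpoints JB) -/(endpoints JA).
  rewrite /wlast /= last_rcons !perm_cons.
  by case: (odd (size M)) pA pB.
Qed.

Lemma closed_walk_pairing (O : {set V}) o q : closed_walk e o q -> o \in O ->
  {subset O <= o :: q} -> ~~ odd #|O| ->
  exists J, [/\ all walk J, forall w, count_mem w (endpoints J) = (w \in O) &
    (wlength J).*2 <= size q].
Proof.
move=> /andP[oq /eqP lq] oO Oq evenO.
have [JA [JB [M [wA wB len [uM mM] [pA pB]]]]] := alternating_split (O :\ o) oq.
have MO : M =i O :\ o.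
  move=> w; rewrite mM; case wO: (w \in O :\ o) => //=.
  by move: wO; rewrite !inE => /andP[/negbTE wo /Oq]; rewrite inE wo.
have oddM : odd (size M).
  by move: evenO; rewrite -(card_uniqP uM) (eq_card MO) (cardsD1 o O) oO /= negbK.
rewrite oddM cats0 in pA; rewrite oddM lq in pB.
have countO J : perm_eq (endpoints J) (o :: M) ->
    forall w, count_mem w (endpoints J) = (w \in O).
  move=> pe w; rewrite (permP pe) /= (count_uniq_mem _ uM) MO !inE eq_sym.
  by case: (w =P o) => [->|]; rewrite ?oO.
have [leAB|ltBA] := leqP (wlength JA) (wlength JB).
  by exists JA; split=> //; [exact: countO | rewrite -len -addnn leq_add2l].
exists JB; split=> //; last by rewrite -len -addnn leq_add2r ltnW.
by apply: countO; apply: perm_trans pB _; rewrite perm_catC.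
Qed.

End Pairing.

Lemma even_card_odd_deg (V : finType) (t : rel V) : symmetric t -> irreflexive t ->
  ~~ odd #|[set v | odd (deg t v)]|.
Proof.
move=> t_sym t_irr; pose r := @enum_rank V.
pose arc v y := t v y && (r v < r y).
have deg_arcs v : deg t v = \sum_y arc v y + \sum_y arc y v.
  rewrite /deg -sum1_card big_mkcond -big_split /=; apply: eq_bigr => y _.
  rewrite inE /arc (t_sym y v); case: (boolP (t v y)) => //= tvy.
  have : r v != r y by apply: contraTneq tvy => /enum_rank_inj ->; rewrite t_irr.
  by case: ltngtP => // /val_inj ->; rewrite eqxx.
have even_sum : ~~ odd (\sum_v deg t v).
  rewrite (eq_bigr _ (fun v _ => deg_arcs v)) big_split /= exchange_big.
  by rewrite addnn odd_double.
have parity_sum : \sum_v deg t v = #|[set v | odd (deg t v)]| + (\sum_v (deg t v)./2).*2.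
  rewrite -sum1_card [\sum_(i in _) 1]big_mkcond -muln2 big_distrl -big_split /=.
  apply: eq_bigr => v _; rewrite inE muln2.
  by rewrite -[in LHS](odd_double_half (deg t v)); case: (odd _).
by move: even_sum; rewrite parity_sum oddD odd_double addbF.
Qed.

Section TreeLeaves.
Variables (V : finType) (t : rel V).
Hypotheses (t_sym : symmetric t)
  (t_acyclic : forall u v, t u v -> ~~ connect (del_edge t u v) u v).

Lemma tree_irrefl : irreflexive t.
Proof. by move=> u; apply/negP => /t_acyclic; rewrite connect0. Qed.

Lemma del_edge_path u v x s : u \notin x :: s -> path t x s -> path (del_edge t u v) x s.
Proof.
elim: s x => //= y s IH x; rewrite !inE negb_or => /andP[ux /norP[uy us]].
case/andP=> txy ps; rewrite IH ?inE ?negb_or ?uy // andbT /del_edge txy /=.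
by rewrite ![_ == u]eq_sym (negbTE ux) (negbTE uy) !andbF.
Qed.

Lemma no_back_edge w c q y : path t w (c :: q) -> uniq [:: w, c & q] -> y \in q ->
  ~~ t w y.
Proof.
move=> pth un /splitPr yq; case: yq pth un => q1 q2 pth un.
apply/negP => /t_acyclic; apply/negP/negPn/connectP.
(* the edge [wc] followed by the path from [c] to [y] avoids the edge [wy] *)
exists (c :: rcons q1 y); last by rewrite /= last_rcons.
move: pth un => /= /andP[twc]; rewrite cat_path /= => /and3P[pq1 tly _].
rewrite !inE !mem_cat !inE !negb_or => /and3P[/and4P[wc wq1 wy _] /and3P[_ cy _] _].
rewrite /del_edge twc (negbTE cy) (negbTE wy) /= !andbF /=.
by rewrite del_edge_path ?rcons_path ?pq1 // !inE mem_rcons !inE !negb_or wc wq1 wy.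
Qed.

Definition induced (S : {set V}) : rel V := fun a b => [&& t a b, a \in S & b \in S].
Definition nbhd (S : {set V}) w := [set y in S | t w y].
Definition degS (S : {set V}) w := #|nbhd S w|.
Definition connected_on (S : {set V}) :=
  forall a b, a \in S -> b \in S -> connect (induced S) a b.

Lemma leaf_neighbour S v u : nbhd S v = [set u] -> [/\ u \in S, t v u & u != v].
Proof.
move=> nb; have : u \in nbhd S v by rewrite nb set11.
rewrite inE => /andP[uS tvu]; split=> //.
by apply: contraTneq tvu => ->; rewrite tree_irrefl.
Qed.

Lemma induced_path_in S w p : path (induced S) w p -> all (mem S) p.
Proof. by elim: p w => //= b p IH w /andP[/and3P[_ _ ->] /IH]. Qed.

(* A maximal simple path cannot be extended at its start [w], and every other
   neighbour of [w] on it would close a cycle: [w] is a leaf. *)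
Lemma leaf_from_path S w p : path (induced S) w p -> uniq (w :: p) -> w \in S ->
  p != [::] -> exists v u, v \in S /\ nbhd S v = [set u].
Proof.
have [n] := ubnP (#|S| - size p); elim: n w p => // n IH w p lt_n pth un wS pn.
have /subsetP/subset_leq_card : {subset w :: p <= S}.
  by move=> y; rewrite inE => /orP[/eqP -> //|]; apply/allP/(induced_path_in pth).
rewrite (card_uniqP un) /= => lt_p.
have [/existsP [y /andP[yN yn]]|] :=
  boolP [exists y, (y \in nbhd S w) && (y \notin w :: p)].
  move: yN; rewrite inE => /andP[yS tyw].
  apply: (IH y (w :: p)) => //=; first by lia.
  - by rewrite /induced t_sym tyw yS wS pth.
  - by rewrite yn; exact: un.
move/existsPn => nb_on_path; case: p pth un lt_p lt_n pn nb_on_path => // c q.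
move=> pth un _ _ _ nb_on_path; exists w, c; split=> //.
apply/setP => y; rewrite !inE; apply/andP/eqP => [[yS twy]|->]; last first.
  by move: pth => /= /andP[/and3P[-> _ ->]].
move: (nb_on_path y); rewrite inE yS twy /= negbK !inE.
case/or3P => [/eqP yw|/eqP //|yq]; first by move: twy; rewrite yw tree_irrefl.
by move: twy; rewrite (negbTE (no_back_edge (sub_path _ pth) un yq)) // => a b /andP[].
Qed.

Lemma leaf_exists S : connected_on S -> 1 < #|S| ->
  exists v u, v \in S /\ nbhd S v = [set u].
Proof.
move=> conS /card_gt1P [a [b [aS bS ab]]].
case/connectP: (conS a b aS bS) => [[|c p] pth lst]; first by move: ab; rewrite lst eqxx.
move: pth => /= /andP[iac _].
apply: (leaf_from_path (w := a) (p := [:: c])) => //=; first by rewrite iac.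
rewrite inE andbT; apply: contraTneq iac => ->.
by rewrite /induced tree_irrefl.
Qed.

Lemma connected_on_del_leaf S v u : connected_on S -> v \in S -> nbhd S v = [set u] ->
  connected_on (S :\ v).
Proof.
move=> conS vS nb a b; rewrite !inE => /andP[av aS] /andP[bv bS].
case/connectP: (conS a b aS bS) => p pth lst.
case/shortenP: pth lst => p' pth' un _ lst; apply/connectP; exists p' => //.
(* a simple path through [v] would enter and leave it through [u] *)
have vp' : v \notin p'.
  apply/negP => /splitPr vp; case: vp pth' un lst => q1 [|c q2] pth' un lst.
    by move: bv; rewrite lst last_cat /= eqxx.
  move: pth'; rewrite cat_path /= => /and3P[_ /and3P[tlv lS _] /andP[/and3P[tvc _ cS] _]].
  have : c \in nbhd S v by rewrite inE cS tvc.
  have : last a q1 \in nbhd S v by rewrite inE lS t_sym.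
  rewrite nb !inE => /eqP lu /eqP cu.
  move: un; rewrite -cat_cons cat_uniq => /and3P[_ /hasPn /(_ c)].
  by rewrite cu -lu mem_last in_cons mem_head orbT => /(_ isT).
apply: (sub_in_path (P := [pred z | z != v]) (e := induced S)) pth'.
- move=> x y; rewrite !inE => xv yv /and3P[txy xS yS].
  by rewrite /induced txy !inE xv yv xS yS.
- by rewrite /= av; apply/allP => z zp; apply: contraNneq vp' => <-.
Qed.

End TreeLeaves.

Section TreeTour.
Variables (V : finType) (e t : rel V).
Hypotheses (e_sym : symmetric e) (t_sym : symmetric t) (t_sub : subrel t e)
  (t_acyclic : forall u v, t u v -> ~~ connect (del_edge t u v) u v).
Implicit Types (S : {set V}) (J : seq (V * seq V)).

Local Notation walk := (walk e).
Local Notation nbhd := (nbhd t).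
Local Notation degS := (degS t).

Definition endpoints_odd S J :=
  forall w, count_mem w (endpoints J) = (w \in S) && odd (degS S w).

Lemma degS_del_leaf S v u w : v \in S -> nbhd S v = [set u] -> w \in S :\ v ->
  degS (S :\ v) w = degS S w - (w == u).
Proof.
move=> vS nb; rewrite inE => /andP[wv wS].
have nbw : nbhd (S :\ v) w = nbhd S w :\ v.
  by apply/setP => y; rewrite !inE andbA [(y != v) && _]andbC.
have vw : (v \in nbhd S w) = (w == u).
  by rewrite -(in_set1 w u) -nb !inE wS vS /= t_sym.
by rewrite /degS nbw (cardsD1 v (nbhd S w)) vw; lia.
Qed.

(* Deleting the leaf [v] removes [v] from the odd vertices and flips the
   parity of [u]. *)
Lemma endpoints_odd_del_leaf S v u J J2 :
  v \in S -> nbhd S v = [set u] -> endpoints_odd S J ->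
  perm_eq [:: v, u & endpoints J2] (endpoints J) \/
    (u \notin endpoints J /\ perm_eq (v :: endpoints J2) (u :: endpoints J)) ->
  endpoints_odd (S :\ v) J2.
Proof.
move=> vS nb oddJ hJ2 w.
have [uS tvu uv] := leaf_neighbour t_acyclic nb.
have degv : degS S v = 1 by rewrite /degS nb cards1.
have degu : 0 < degS S u by apply/card_gt0P; exists v; rewrite inE vS t_sym.
have count_J2 x :
    count_mem x (endpoints J) = (v == x) + (u == x) + count_mem x (endpoints J2) \/
    u \notin endpoints J /\
      (v == x) + count_mem x (endpoints J2) = (u == x) + count_mem x (endpoints J).
  case: hJ2 => [pe|[uJ pe]]; [left | right; split=> //];
    by have := permP pe (pred1 x); rewrite /=; lia.
have := oddJ w; have := count_J2 w.
have [->|wv] := eqVneq w v.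
  by rewrite setD11 vS degv (negbTE uv) /=; lia.
have [->|wu] := eqVneq w u.
  rewrite (degS_del_leaf vS nb) ?inE ?uv // uS eqxx oddB // addbT.
  by case: (odd _) => -[|[/count_memPn ->]] /=; lia.
case wS: (w \in S); last by rewrite !inE wS andbF; lia.
by rewrite (degS_del_leaf vS nb) ?(negbTE wu) ?subn0 !inE ?wv ?wS //; lia.
Qed.

(* An open walk ending at [u] is merged with the walk of [J] ending at [u]
   if there is one, is closed up if it starts at [u], and is added to [J]
   otherwise. *)
Lemma attach_walk a W u J : path e a W -> last a W = u -> all walk J ->
  exists J2 d, [/\ all walk J2, closed_walk e u d,
    wlength J2 + size d = size W + wlength J,
    perm_eq (u :: endpoints J2) (a :: endpoints J) \/
      (u \notin a :: endpoints J /\ endpoints J2 = [:: a, u & endpoints J]) &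
    forall z, (z \in a :: W) || on_walks J z -> on_walks J2 z || (z \in u :: d)].
Proof.
move=> aW lW wJ; have uW : u \in a :: W by rewrite -lW mem_last.
have [uJ|uJ] := boolP (u \in endpoints J).
  have [b [s [J' [[bs ls] wJ' pe len cov]]]] := extract_walk e_sym uJ wJ.
  have rb : last u (rev (belast b s)) = b by rewrite -ls; exact: (wrev_last (b, s)).
  have rs : path e u (rev (belast b s)).
    by rewrite -ls -[path _ _ _]/(walk (wrev (b, s))) (wrev_walk e_sym).
  have mr : u :: rev (belast b s) =i b :: s by rewrite -ls; exact: (mem_wrev (b, s)).
  exists ((a, W ++ rev (belast b s)) :: J'), [::]; split=> //.
  - by rewrite /= wJ' andbT /walk /= cat_path aW lW rs.
  - by rewrite /closed_walk /= eqxx.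
  - rewrite /wlength /= -/(wlength J') -/(wlength J) size_cat size_rev size_belast len.
    by rewrite addn0 addnA.
  - left; apply/permP => P; have := permP pe P; rewrite /endpoints /= -/(endpoints J').
    by rewrite /wlast /= last_cat lW rb => ->; lia.
  - move=> z /orP[zW|]; first by rewrite /on_walks /= -cat_cons mem_cat zW.
    rewrite cov -mr inE /on_walks /= -/(on_walks J' z) -cat_cons mem_cat.
    by case/orP=> [/orP[/eqP ->|->]|->]; rewrite ?uW ?orbT.
have [ua|ua] := eqVneq u a.
  exists J, W; split=> //.
  - by rewrite /closed_walk ua aW lW ua eqxx.
  - by rewrite addnC.
  - by left; rewrite ua.
  - by move=> z /orP[zW|->]; rewrite ?ua ?zW ?orbT.
exists ((a, W) :: J), [::]; split=> //.
- by rewrite /= wJ andbT.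
- by rewrite /closed_walk /= eqxx.
- by rewrite /wlength /= -/(wlength J) addn0.
- by right; rewrite inE negb_or ua uJ /endpoints /= /wlast /= lW.
- by move=> z /orP[zW|zJ]; rewrite /on_walks /= ?zW // -/(on_walks J z) zJ orbT.
Qed.

(* The walk of [J] ending at the leaf [v] is extended by the tree edge [vu]. *)
Lemma leaf_step S J v u :
  v \in S -> nbhd S v = [set u] -> all walk J -> endpoints_odd S J ->
  exists J2 d, [/\ all walk J2, endpoints_odd (S :\ v) J2, closed_walk e u d,
    wlength J2 + size d = (wlength J).+1 &
    forall z, (z \in S) || on_walks J z ->
      [|| z \in S :\ v, on_walks J2 z | z \in u :: d]].
Proof.
move=> vS nb wJ oddJ.
have [_ tvu uv] := leaf_neighbour t_acyclic nb.
have vJ : v \in endpoints J.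
  by rewrite -has_pred1 has_count oddJ vS /degS nb cards1.
have [a [s [J' [[as_ ls] wJ' pe len cov]]]] := extract_walk e_sym vJ wJ.
have aW : path e a (rcons s u) by rewrite rcons_path as_ ls t_sub.
have [J2 [d [wJ2 ud len2 ends2 cov2]]] := attach_walk aW (last_rcons a s u) wJ'.
exists J2, d; split=> //.
- apply: (endpoints_odd_del_leaf vS nb oddJ).
  case: ends2 => [pe2|[uJ' ->]]; [left | right; split].
  + apply/permP => P; have := permP pe2 P; have := permP pe P.
    by rewrite /= => -> e2; rewrite [RHS]addnCA -e2.
  + move: uJ'; rewrite (perm_mem pe) !inE => /norP[/negbTE -> /negbTE ->].
    by rewrite orbF.
  + apply/permP => P; have := permP pe P; rewrite /= => ->.
    by rewrite [LHS]addnCA [in LHS](addnCA (P v)) [RHS]addnCA.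
- by rewrite len2 size_rcons len.
move=> z; rewrite cov; case: (boolP (z \in S :\ v)) => //= zS' zSJ; apply: cov2.
have sub_aW : {subset a :: s <= a :: rcons s u}.
  by move=> y; rewrite -rcons_cons mem_rcons inE => ->; rewrite orbT.
case/orP: zSJ => [zS|/orP[/sub_aW -> //|-> //]]; last exact: orbT.
have -> : z = v by apply/eqP; move: zS'; rewrite !inE zS andbT negbK.
by rewrite sub_aW // -ls mem_last.
Qed.

(* Induction on the tree by leaf stripping; the closed walk left over by
   [leaf_step] is spliced into the tour of the smaller tree. *)
Lemma tree_walks_tour m S J : #|S| = m.+1 -> connected_on t S -> all walk J ->
  endpoints_odd S J ->
  exists y q, [/\ closed_walk e y q, size q = m + wlength J &
    forall z, (z \in S) || on_walks J z -> z \in y :: q].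
Proof.
elim: m S J => [|m IH] S J cardS conS wJ oddJ.
  have [r defS] : exists r, S = [set r] by apply/cards1P; rewrite cardS.
  have no_ends w : w \notin endpoints J.
    apply/count_memPn; rewrite oddJ defS inE; case: eqP => //= ->.
    rewrite /degS (_ : nbhd _ _ = set0) ?cards0 //.
    by apply/setP => y; rewrite !inE; case: eqP => // ->; rewrite (tree_irrefl t_acyclic).
  case: J no_ends {wJ oddJ} => [_|w J /(_ w.1)]; last by rewrite inE eqxx.
  exists r, [::]; split=> [|//|z]; first by rewrite /closed_walk /= eqxx.
  by rewrite orbF defS inE => /eqP ->; exact: mem_head.
have [v [u [vS nb]]] : exists v u, v \in S /\ nbhd S v = [set u].
  by apply: (leaf_exists t_sym t_acyclic conS); rewrite cardS.
have [uS _ uv] := leaf_neighbour t_acyclic nb.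
have [J2 [d [wJ2 oddJ2 ud len cov]]] := leaf_step vS nb wJ oddJ.
have cardS' : #|S :\ v| = m.+1 by move: cardS; rewrite (cardsD1 v) vS; case.
have uS' : u \in S :\ v by rewrite !inE uS uv.
have conS' := connected_on_del_leaf t_sym conS vS nb.
have [y [q [yq sq cov']]] := IH _ _ cardS' conS' wJ2 oddJ2.
have uyq : u \in y :: q by rewrite cov' ?uS'.
have [q' uq' [sq' mq']] := splice_closed_walk yq uyq ud.
exists u, q'; split=> //; first by rewrite sq' sq -addnA len addnS.
move=> z /cov /or3P[zS|zJ|]; rewrite mq' -cat_cons mem_cat.
- by rewrite cov' ?zS.
- by rewrite cov' ?zJ ?orbT.
- by rewrite inE => /orP[/eqP ->|->]; rewrite ?uyq ?orbT.
Qed.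

End TreeTour.

Lemma spanning_tree_pairing_tour (V : finType) (e t : rel V) x p :
  symmetric e -> spanning_tree e t -> closed_walk e x p ->
  (forall v, odd (deg t v) -> v \in x :: p) ->
  exists y q, tsp_tour e y q /\ (size q).*2 <= (#|V|.-1).*2 + size p.
Proof.
move=> e_sym [t_sym [t_sub [t_conn t_acyc]]] xp odd_xp.
pose O := [set v | odd (deg t v)].
have [J [wJ endsJ lenJ]] : exists J, [/\ all (walk e) J,
    forall w, count_mem w (endpoints J) = (w \in O) & (wlength J).*2 <= size p].
  have [O0|[o oO]] := set_0Vmem O; first by exists [::]; split=> // w; rewrite O0 inE.
  have oxp : o \in x :: p by apply: odd_xp; rewrite inE in oO.
  have [q xq [sq mq]] := rotate_closed_walk xp oxp.
  have Oq : {subset O <= o :: q} by move=> w; rewrite mq inE => /odd_xp.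
  have [J [wJ endsJ lenJ]] := closed_walk_pairing xq oO Oq
    (even_card_odd_deg t_sym (tree_irrefl t_acyc)).
  by exists J; rewrite -sq.
have degT w : degS t setT w = deg t w by apply: eq_card => y; rewrite !inE.
have cardT : #|[set: V]| = (#|V|.-1).+1.
  by rewrite cardsT prednK //; apply/card_gt0P; exists x.
have conT : connected_on t setT.
  move=> a b _ _; rewrite (eq_connect (e' := t)) // => c d.
  by rewrite /induced !inE !andbT.
have oddT : endpoints_odd t setT J by move=> w; rewrite endsJ degT !inE.
have [y [q [yq sq cov]]] := tree_walks_tour e_sym t_sym t_sub t_acyc cardT conT wJ oddT.
exists y, q; split; first by split=> // z; rewrite cov ?inE.
by rewrite sq doubleD leq_add2l.
Qed.

Local Open Scope ring_scope.

Lemma shorter_tour_bound (R : realFieldType) (g n k l a b : R) :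
  g < 3 -> 1 <= k <= n -> 0 <= l <= (1 + g) * k ->
  a = l + 2 * (n - k) -> 2 * b <= 2 * (n - 1) + l ->
  a * (3 - g) <= 4 * n \/ b * (3 - g) <= 4 * n.
Proof.
move=> g3 /andP[k1 kn] /andP[l0 lk] -> hb.
have g1 : 0 <= 1 + g.
  rewrite leNgt; apply/negP => g1; suff : (1 + g) * k < 0 by lra.
  by rewrite pmulr_llt0 //; lra.
have [g_ge1|g_lt1] := lerP 1 g.
  right.
  have : 0 <= (3 - g) * (2 * (n - 1) + l - 2 * b) by apply: mulr_ge0; lra.
  have : 0 <= (3 - g) * ((1 + g) * k - l) by apply: mulr_ge0; lra.
  (* (1 + g) (3 - g) = 4 - (g - 1)^2 *)
  have : 0 <= k * (g - 1) ^+ 2 by apply: mulr_ge0; rewrite ?sqr_ge0; lra.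
  have : 0 <= (n - 1) * (g - 1) by apply: mulr_ge0; lra.
  lra.
have hb1 : 0 <= (1 - g) * (2 * (n - 1) + l - 2 * b) by apply: mulr_ge0; lra.
have [ab|ba] := lerP (l + 2 * (n - k)) b; [left | right].
  have : 0 <= (b - (l + 2 * (n - k))) * (2 - 2 * g) by apply: mulr_ge0; lra.
  lra.
have : 0 <= (l + 2 * (n - k) - b) * (1 + g) by apply: mulr_ge0; lra.
lra.
Qed.

Theorem theorem9 (R : realFieldType) (V : finType) (e : rel V) (gamma : R)
  (t : rel V) (x : V) (p : seq V) :
  simple_graph e ->
  two_vertex_connected e ->
  gamma < 3 ->
  spanning_tree e t ->
  closed_walk e x p ->
  (forall v : V, odd (deg t v) -> v \in x :: p) ->
  (walk_length x p)%:R <= (1 + gamma) * (walk_nverts x p)%:R ->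
  exists (y : V) (q : seq V),
    tsp_tour e y q /\ (walk_length y q)%:R <= 4 * (#|V|)%:R / (3 - gamma).
Proof.
move=> [e_sym _] [_ [e_conn _]] g3 tree xp odd_xp short.
have nverts : walk_nverts x p = #|x :: p|.
  rewrite /walk_nverts -(card_uniqP (undup_uniq _)).
  by apply: eq_card => z; rewrite mem_undup.
have k_gt0 : (0 < #|x :: p|)%N by apply/card_gt0P; exists x; rewrite mem_head.
have k_le_n : (#|x :: p| <= #|V|)%N := max_card _.
have [ya [qa [tour_a size_a]]] := closed_walk_to_tour e_sym e_conn xp.
have [yb [qb [tour_b size_b]]] := spanning_tree_pairing_tour e_sym tree xp odd_xp.
have k_bounds : 1 <= (#|x :: p|%:R : R) <= #|V|%:R.
  by rewrite ler1n k_gt0 ler_nat k_le_n.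
have l_bounds : 0 <= ((size p)%:R : R) <= (1 + gamma) * #|x :: p|%:R.
  by rewrite ler0n -nverts.
have a_eq : (size qa)%:R = (size p)%:R + 2 * (#|V|%:R - #|x :: p|%:R) :> R.
  by rewrite size_a natrD -muln2 natrM (natrB _ k_le_n) mulrC.
have b_bound : 2 * (size qb)%:R <= 2 * (#|V|%:R - 1) + (size p)%:R :> R.
  move: size_b; rewrite -(ler_nat R) -!muln2 !natrD !natrM -subn1.
  by rewrite natrB ?(leq_trans k_gt0) // ![_ * 2%:R]mulrC.
case: (shorter_tour_bound g3 k_bounds l_bounds a_eq b_bound) => bound;
  [exists ya, qa | exists yb, qb]; split=> //;
  by rewrite /walk_length ler_pdivlMr ?subr_gt0.
Qed.
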